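(* Let $G$ be a finite group generated by a conjugacy class $X$ and assume that the derived subgroup $[G,G]$ is a non-abelian simple group. Let $V$ be an irreducible Yetter--Drinfeld module over $kG$ with support $X$. Then $V$ admits no non-trivial decreasing filtration, i.e. no decreasing filtration $(\mathcal F^iV)_{i\ge0}$ of the braided vector space $V$ in which some $\mathcal F^iV$ is neither $\{0\}$ nor $V$.
   Context: A Yetter--Drinfeld module over $kG$ is a $kG$-module $V$ with a $G$-grading $V=\bigoplus_gV_g$, $hV_g\subseteq V_{hgh^{-1}}$; support $\{g:V_g\ne0\}$; braiding $c(v\otimes w)=gw\otimes v$ for $v\in V_g$. A decreasing filtration of a braided vector space $(V,c)$ is a family of subspaces $(\mathcal F^iV)_{i\ge0}$ with $V=\mathcal F^0V\supseteq\mathcal F^kV\supseteq\mathcal F^lV$ for $0\le k\le l$, $\bigcap_i\mathcal F^iV=0$, and $c(\mathcal F^iV\otimes\mathcal F^jV)\subseteq\sum_{k+l\ge i+j}\mathcal F^kV\otimes\mathcal F^lV$ for all $i,j$. *)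

From HB Require Import structures.
From mathcomp Require Import all_boot all_order all_algebra all_fingroup all_solvable.
Set Implicit Arguments. Unset Strict Implicit. Unset Printing Implicit Defensive.
Import GRing.Theory.
Local Open Scope ring_scope.

Section YD.
Variables (gT : finGroupType) (G : {group gT}) (k : fieldType) (V : vectType k).

(* Note: h g h^-1 is written (g ^ h^-1)%g in mathcomp.                      *)
Definition is_YD (act : gT -> 'End(V)) (Vg : gT -> {vspace V}) : Prop :=
  [/\ act 1%g = \1%VF,
      (forall g h, g \in G -> h \in G -> act (g * h)%g = (act g \o act h)%VF),
      directv (\sum_(g in G) Vg g)%VS,
      (\sum_(g in G) Vg g)%VS = fullv &
      (forall g h, g \in G -> h \in G -> (act h @: Vg g <= Vg (g ^ h^-1)%g)%VS)].

Definition YD_support (Vg : gT -> {vspace V}) : {set gT} :=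
  [set g in G | Vg g != 0%VS].

Definition YD_submodule (act : gT -> 'End(V)) (Vg : gT -> {vspace V})
    (W : {vspace V}) : Prop :=
  (forall h, h \in G -> (act h @: W <= W)%VS) /\
  W = (\sum_(g in G) (W :&: Vg g))%VS.

Definition YD_irreducible (act : gT -> 'End(V)) (Vg : gT -> {vspace V}) : Prop :=
  fullv != (0 : {vspace V})%VS /\
  forall W, YD_submodule act Vg W -> W = 0%VS \/ W = fullv.

(* Model of V (x) V: the matrices 'M_(n,n), n = dim V, via coordinates in a *)
(* fixed basis;  v (x) w  is the matrix (x_i y_j).                           *)
Definition tens (v w : V) : 'M[k]_(\dim (fullv : {vspace V})) :=
  \matrix_(i, j) (coord (vbasis fullv) i v * coord (vbasis fullv) j w).

(* The subspace A (x) B of V (x) V, as a row space of vectorised matrices. *)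
Definition tens_space (A B : {vspace V}) :=
  (\sum_(a <- vbasis A) \sum_(b <- vbasis B) <<mxvec (tens a b)>>)%MS.

Definition is_YD_braiding (act : gT -> 'End(V)) (Vg : gT -> {vspace V})
    (c : 'M[k]_(\dim (fullv : {vspace V})) -> 'M[k]_(\dim (fullv : {vspace V}))) : Prop :=
  (forall a M N, c (a *: M + N) = a *: c M + c N) /\
  (forall g v w, g \in G -> v \in Vg g -> c (tens v w) = tens (act g w) v).

(* sum_{k+l >= i+j} F^k (x) F^l is the union of its finite partial sums.    *)
Definition decreasing_filtration
    (c : 'M[k]_(\dim (fullv : {vspace V})) -> 'M[k]_(\dim (fullv : {vspace V})))
    (F : nat -> {vspace V}) : Prop :=
  [/\ F 0%N = fullv,
      (forall i j, (i <= j)%N -> (F j <= F i)%VS),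
      (forall v, (forall i, v \in F i) -> v = 0) &
      (forall i j M, (mxvec M <= tens_space (F i) (F j))%MS ->
         exists N, (mxvec (c M) <=
           \sum_(p < N) \sum_(q < N | (i + j <= p + q)%N)
              tens_space (F p) (F q))%MS)].

End YD.

(* 1. Reading the filtration axiom for c(v (x) w) = g.w (x) v (v in V_g)      *)
(*    modulo F^a (x) F^b shows that G preserves every F^j, and that for w in  *)
(*    F^j each coordinate of g.w modulo F^(j+1) is a "multiplier": a         *)
(*    function lam on G such that v |-> sum_g lam(g) v_g preserves F^i.       *)
(* 2. Multipliers form a unital algebra. If distinct x, y in X always act    *)
(*    differently on the associated graded space, multipliers separate X,     *)
(*    so by interpolation every projection v |-> v_x preserves F^i; F^i is a  *)
(*    submodule, hence 0 or V by irreducibility.                              *)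
(* 3. Otherwise some x != y in X agree on the graded space, so x^-1 y, a     *)
(*    nontrivial element of [G, G], shifts F by one step. The elements        *)
(*    shifting F by m are closed under products and conjugation, and          *)
(*    commutators add shifts; [G, G] being simple and perfect, it shifts F    *)
(*    arbitrarily far, so it acts trivially, hence centralises X and G, and   *)
(*    is abelian: a contradiction.                                            *)

From HB Require Import structures.
From mathcomp Require Import all_boot all_order all_algebra all_fingroup all_solvable.
From mathcomp Require Import zify.
From Stdlib Require Import Classical.
Set Implicit Arguments. Unset Strict Implicit. Unset Printing Implicit Defensive.
Import GRing.Theory passmx.
Local Open Scope ring_scope.

Section TensorModel.
Variables (k : fieldType) (V : vectType k).
Local Notation n := (\dim {:V}).
Local Notation e := (vbasis {:V}).
Let e_basis : basis_of {:V} e := vbasisP fullv.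

Lemma tensE (v w : V) : tens v w = (rVof e v)^T *m rVof e w.
Proof. by apply/matrixP=> i j; rewrite !mxE big_ord1 !mxE. Qed.

Lemma tens_eq0 (v w : V) : (tens v w == 0) = (v == 0) || (w == 0).
Proof.
rewrite -(rVof_eq0 e_basis v) -(rVof_eq0 e_basis w) tensE.
apply/idP/idP; last by case/orP=> /eqP->; rewrite ?linear0 ?mul0mx ?mulmx0.
apply: contraLR; rewrite negb_or => /andP[/rV0Pn[i vi] /rV0Pn[j wj]].
by apply/matrix0Pn; exists i, j; rewrite mxE big_ord1 mxE mulf_neq0.
Qed.

Lemma tensZl a (v w : V) : tens (a *: v) w = a *: tens v w.
Proof. by rewrite !tensE linearZ /= linearZ /= -scalemxAl. Qed.

Lemma tensZr a (v w : V) : tens v (a *: w) = a *: tens v w.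
Proof. by rewrite !tensE linearZ /= -scalemxAr. Qed.

Lemma tens_suml I (r : seq I) (P : pred I) (vs : I -> V) w :
  tens (\sum_(i <- r | P i) vs i) w = \sum_(i <- r | P i) tens (vs i) w.
Proof.
by rewrite tensE !linear_sum mulmx_suml; apply: eq_bigr => i _; rewrite tensE.
Qed.

Lemma tens_sumr I (r : seq I) (P : pred I) v (ws : I -> V) :
  tens v (\sum_(i <- r | P i) ws i) = \sum_(i <- r | P i) tens v (ws i).
Proof. by rewrite tensE !linear_sum; apply: eq_bigr => i _; rewrite tensE. Qed.

Lemma row_tens l (v w : V) : row l (tens v w) = coord e l v *: rVof e w.
Proof. by apply/rowP=> j; rewrite !mxE. Qed.

Definition tensor_map (f g : 'End(V)) : {linear 'M[k]_n -> 'M[k]_n} :=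
  mulmxr (mxof e e g) \o mulmx (mxof e e f)^T.

Lemma tensor_map_tens f g v w : tensor_map f g (tens v w) = tens (f v) (g w).
Proof. by rewrite /tensor_map /= !tensE !(rVof_app e e_basis) trmx_mul !mulmxA. Qed.

Lemma tens_space_basis (A B : {vspace V}) (i : 'I_(\dim A)) (j : 'I_(\dim B)) :
  (mxvec (tens (vbasis A)`_i (vbasis B)`_j) <= tens_space A B)%MS.
Proof.
rewrite /tens_space (big_nth 0) big_mkord size_tuple (sumsmx_sup i) //.
by rewrite (big_nth 0) big_mkord size_tuple (sumsmx_sup j) // genmxE.
Qed.

Lemma tens_space_sub (A B : {vspace V}) a b : a \in A -> b \in B ->
  (mxvec (tens a b) <= tens_space A B)%MS.
Proof.
move=> Aa Bb; rewrite (coord_vbasis Aa) (coord_vbasis Bb) tens_suml linear_sum.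
apply: summx_sub => i _; rewrite tens_sumr linear_sum; apply: summx_sub => j _.
by rewrite tensZl tensZr !linearZ /= !scalemx_sub ?tens_space_basis.
Qed.

Lemma tens_space_ker (A B : {vspace V}) (f g : 'End(V)) :
  {in A, forall a, f a = 0} \/ {in B, forall b, g b = 0} ->
  (tens_space A B <= kermx (lin_mx (tensor_map f g)))%MS.
Proof.
move=> fg0; rewrite /tens_space big_tuple; apply/sumsmx_subP => i _.
rewrite big_tuple; apply/sumsmx_subP => j _.
rewrite genmxE sub_kermx mul_vec_lin tensor_map_tens mxvec_eq0 tens_eq0.
by case: fg0 => [f0|g0]; rewrite ?f0 ?g0 ?vbasis_mem ?mem_tnth ?eqxx ?orbT.
Qed.
End TensorModel.

Section QuotientMap.
Variables (k : fieldType) (V : vectType k).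

(* An endomorphism of V with kernel exactly U; it stands for V -> V/U. *)
Definition quotv (U : {vspace V}) : 'End(V) := (\1%VF - projv U)%R.

Lemma quotv_eq0 U v : (quotv U v == 0) = (v \in U).
Proof.
rewrite add_lfunE opp_lfunE id_lfunE subr_eq0.
by apply/eqP/idP => [->|/projv_id//]; exact: memv_proj.
Qed.
End QuotientMap.

Section Filtration.
Variables (k : fieldType) (V : vectType k).
Variables (c : 'M[k]_(\dim {:V}) -> 'M[k]_(\dim {:V})) (F : nat -> {vspace V}).
Hypothesis HF : decreasing_filtration c F.

Lemma filtration_top : F 0 = fullv.
Proof. by case: HF. Qed.

Lemma filtration_mono i j : (i <= j)%N -> (F j <= F i)%VS.
Proof. by case: HF => _ mono _ _; apply: mono. Qed.

Lemma filtration_separated v : (forall i, v \in F i) -> v = 0.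
Proof. by case: HF => _ _ sep _; apply: sep. Qed.

Lemma filtration_degree v : v != 0 -> exists d, v \in F d /\ v \notin F d.+1.
Proof.
move=> v0; have [i vFi] : exists i, v \notin F i.
  apply: NNPP => allF; case/eqP: v0; apply: filtration_separated => i.
  by apply/negPn/negP => vFi; apply: allF; exists i.
have [m vFm minm] := ex_minnP (ex_intro (fun i => v \notin F i) i vFi).
have m_gt0 : (0 < m)%N by case: m vFm {minm} => //; rewrite filtration_top memvf.
exists m.-1; rewrite prednK //; split => //.
by apply/negPn/negP => /minm; rewrite leqNgt ltn_predL m_gt0.
Qed.

(* The filtration axiom for c, read modulo F^a (x) F^b: when a + b <= i + j + 1 *)
(* every term F^p (x) F^q with p + q >= i + j has p >= a or q >= b, so the     *)
(* image of F^i (x) F^j under c vanishes in V/F^a (x) V/F^b.                   *)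
Lemma braiding_vanishes i j a b M : (a + b <= (i + j).+1)%N ->
  (mxvec M <= tens_space (F i) (F j))%MS ->
  tensor_map (quotv (F a)) (quotv (F b)) (c M) = 0.
Proof.
move=> ab MFij; case: HF => _ _ _ /(_ i j M MFij) [N cM].
apply/eqP; rewrite -mxvec_eq0 -mul_vec_lin -sub_kermx (submx_trans cM) //.
apply/sumsmx_subP => p _; apply/sumsmx_subP => q pq; apply: tens_space_ker.
have [ap|pa] := leqP a p; [left|right] => u Fu; apply/eqP; rewrite quotv_eq0.
  exact: subvP (filtration_mono ap) _ Fu.
by apply: subvP (filtration_mono (_ : b <= q)%N) _ Fu; lia.
Qed.
End Filtration.

Section YetterDrinfeld.
Variables (gT : finGroupType) (G : {group gT}) (k : fieldType) (V : vectType k).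
Variables (act : gT -> 'End(V)) (Vg : gT -> {vspace V}).
Hypothesis HYD : is_YD G act Vg.

Let sumV : (\sum_(g in G) Vg g)%VS = fullv. Proof. by case: HYD. Qed.
Let dirV : directv (\sum_(g in G) Vg g). Proof. by case: HYD. Qed.

Definition grade g : 'End(V) := sumv_pi_for (esym sumV) g.

Lemma grade_mem g v : grade g v \in Vg g.
Proof. exact: memv_sum_pi. Qed.

Lemma grade_sum v : \sum_(g in G) grade g v = v.
Proof. exact: sumv_pi_sum (memvf v). Qed.

Lemma grade_sum_homog (u : gT -> V) : (forall g, g \in G -> u g \in Vg g) ->
  forall g, g \in G -> grade g (\sum_(h in G) u h) = u g.
Proof.
move=> Vu g Gg; apply/eqP; rewrite -subr_eq0; apply/eqP; move: g Gg.
apply: (directv_sum_independent dirV) => [h Gh|]; first by rewrite memvB ?grade_mem ?Vu.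
by rewrite sumrB grade_sum subrr.
Qed.

Lemma grade_homog g h v : g \in G -> h \in G -> v \in Vg g ->
  grade h v = if h == g then v else 0.
Proof.
move=> Gg Gh Vv; have sum_v : \sum_(l in G) (if l == g then v else 0) = v.
  by rewrite (bigD1 g) //= eqxx big1 ?addr0 // => l /andP[_ /negbTE ->].
by rewrite -{1}sum_v grade_sum_homog // => l _; case: eqP => [->|_]; rewrite ?mem0v.
Qed.

Lemma grade_out g v : g \in G -> g \notin YD_support G Vg -> grade g v = 0.
Proof.
move=> Gg; rewrite inE Gg negbK => /eqP Vg0.
by apply/eqP; rewrite -memv0 -Vg0 grade_mem.
Qed.

Lemma act1 v : act 1%g v = v.
Proof. by case: HYD => act1 _ _ _ _; rewrite act1 id_lfunE. Qed.

Lemma actM g h v : g \in G -> h \in G -> act (g * h)%g v = act g (act h v).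
Proof. by case: HYD => _ actM _ _ _ Gg Gh; rewrite actM // comp_lfunE. Qed.

Lemma actVK g v : g \in G -> act g^-1%g (act g v) = v.
Proof. by move=> Gg; rewrite -actM ?groupV // mulVg act1. Qed.

Lemma act_grading g h v : g \in G -> h \in G -> v \in Vg g ->
  act h v \in Vg (g ^ h^-1)%g.
Proof.
by case: HYD => _ _ _ _ actV Gg Gh Vv; apply: subvP (actV g h Gg Gh) _ (memv_img _ Vv).
Qed.

(* support: a nonzero v in V_x is also homogeneous of degree z^-1 x z.      *)
Lemma trivial_action_cent z : z \in G -> (forall v, act z v = v) ->
  YD_support G Vg \subset 'C[z]%g.
Proof.
move=> Gz zfix; apply/subsetP => x; rewrite inE => /andP[Gx Vx0].
pose v := vpick (Vg x); have Vv : v \in Vg x := memv_pick (Vg x).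
have Vzv : v \in Vg (x ^ z^-1)%g by rewrite -(zfix v) act_grading.
have v0 : v != 0 by rewrite vpick0.
have := grade_homog Gx Gx Vv; rewrite eqxx (grade_homog _ Gx Vzv) ?groupJ ?groupV //.
case: eqP => [xJ _|_ v_eq0]; last by rewrite -v_eq0 eqxx in v0.
by apply/cent1P/commgP/conjg_fixP; rewrite {1}xJ conjgKV.
Qed.

Section Braiding.
Variable c : 'M[k]_(\dim {:V}) -> 'M[k]_(\dim {:V}).
Hypothesis Hbr : is_YD_braiding G act Vg c.

Lemma braiding_sum I (r : seq I) (P : pred I) (Ms : I -> 'M[k]_(\dim {:V})) :
  c (\sum_(i <- r | P i) Ms i) = \sum_(i <- r | P i) c (Ms i).
Proof.
have cD M N : c (M + N) = c M + c N.
  by case: Hbr => c_lin _; have := c_lin 1 M N; rewrite !scale1r.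
have c0 : c 0 = 0 by apply: (@addIr _ (c 0)); rewrite -cD !add0r.
by elim/big_rec2: _ => [|i M N _ <-]; rewrite ?cD.
Qed.

Lemma braiding_tens v w :
  c (tens v w) = \sum_(g in G) tens (act g w) (grade g v).
Proof.
rewrite -{1}(grade_sum v) tens_suml braiding_sum; apply: eq_bigr => g Gg.
by case: Hbr => _ c_tens; rewrite (c_tens g) ?grade_mem.
Qed.
End Braiding.
End YetterDrinfeld.

Section Interpolation.
Variables (T : eqType) (k : fieldType) (A : (T -> k) -> Prop).
Hypothesis A_const : forall a, A (fun _ => a).
Hypothesis A_lin : forall a f g, A f -> A g -> A (fun t => a * f t + g t).
Hypothesis A_mul : forall f g, A f -> A g -> A (fun t => f t * g t).

Lemma separating_indicator x (r : seq T) :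
  (forall y, y \in r -> exists2 f, A f & f x != f y) ->
  exists f, [/\ A f, f x = 1 & forall y, y \in r -> f y = 0].
Proof.
elim: r => [_|y r IHr sep]; first by exists (fun _ => 1); split.
have [|f [Af fx1 fr0]] := IHr.
  by move=> z rz; apply: sep; rewrite inE rz orbT.
have [L AL Lxy] := sep y (mem_head y r).
pose a := (L x - L y)^-1.
exists (fun t => f t * (a * L t + - (a * L y))); split.
- by apply: A_mul => //; apply: A_lin.
- by rewrite fx1 mul1r -mulrBr mulVf ?subr_eq0.
- by move=> z; rewrite inE => /predU1P[->|/fr0->]; rewrite ?subrr ?mulr0 ?mul0r.
Qed.
End Interpolation.

Section GroupFacts.
Variable gT : finGroupType.
Implicit Types H : {group gT}.

Lemma simple_nonabelian_perfect H : simple H -> ~~ abelian H -> [~: H, H]%g = H.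
Proof.
move=> /simpleP[_ normal_triv] nabH.
have nH' : ([~: H, H] <| H)%g by rewrite -derg1 der_normal.
have [/commG1P H'1|//] := normal_triv [group of [~: H, H]%g] nH'.
by rewrite abelianE H'1 in nabH.
Qed.

(* In a simple group, a property closed under products and conjugation     *)
(* and holding for one nontrivial element holds everywhere, because the     *)
(* normal closure of that element is the whole group.                        *)
Lemma simple_normal_closure H (P : gT -> Prop) h :
  simple H -> h \in H -> h != 1%g -> P h -> P 1%g ->
  (forall g1 g2, P g1 -> P g2 -> P (g1 * g2)%g) ->
  (forall g z, P g -> z \in H -> P (g ^ z)%g) ->
  forall g, g \in H -> P g.
Proof.
move=> /simpleP[_ normal_triv] Hh h1 Ph P1 PM PJ.
pose K := <<h ^: H>>%g.
have nKH : (K <| H)%g.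
  rewrite /normal gen_subG class_subG //=.
  exact: subset_trans (class_norm h H) (norm_gen _).
have defK : K :=: H.
  case: (normal_triv [group of K] nKH) => //= K1; case/eqP: h1.
  by apply/set1gP; rewrite -K1 mem_gen ?class_refl.
move=> g; rewrite -defK => /gen_prodgP[m [cs Kcs ->]].
apply: (big_ind P) => // i _; have /imsetP[z Hz ->] := Kcs i; exact: PJ.
Qed.

Lemma perfect_lift H (P : nat -> gT -> Prop) :
  [~: H, H]%g = H -> (forall m, P m 1%g) ->
  (forall m g1 g2, P m g1 -> P m g2 -> P m (g1 * g2)%g) ->
  (forall a b g1 g2, P a g1 -> P b g2 -> P (a + b)%N [~ g1, g2]%g) ->
  (forall g, g \in H -> P 1%N g) -> forall m g, g \in H -> P m.+1 g.
Proof.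
move=> perfH P1 PM PR P_H; elim=> [|m IHm]; first exact: P_H.
move=> g; rewrite -perfH => /gen_prodgP[r [cs Hcs ->]].
apply: (big_ind (P m.+2)) => [|g1 g2|i _]; [exact: P1 | exact: PM |].
case/imset2P: (Hcs i) => a b Ha Hb ->.
by have := PR m.+1 1%N a b (IHm a Ha) (P_H b Hb); rewrite addn1.
Qed.

Lemma class_mulVg_der (G : {group gT}) z x y : z \in G ->
  x \in (z ^: G)%g -> y \in (z ^: G)%g -> (x^-1 * y)%g \in [~: G, G]%g.
Proof.
move=> Gz /imsetP[a Ga ->] /imsetP[b Gb ->].
have -> : (z ^ b = (z ^ a) ^ (a^-1 * b))%g by rewrite -conjgM mulKVg.
by apply: mem_commg; rewrite ?groupJ ?groupM ?groupV.
Qed.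
End GroupFacts.

(* The commutator of two endomorphisms u, v of an abelian group, evaluated  *)
(* at w, expressed through the differences u - 1 and v - 1.                   *)
Lemma commutator_diff (M : zmodType) (uvw uw vw vuw w : M) :
  uvw - vuw = (uvw - uw - (vw - w)) - (vuw - vw - (uw - w)).
Proof.
rewrite -[uvw - uw - _]addrA -opprD -[vuw - vw - _]addrA -opprD.
by rewrite [vw + (uw - w)]addrCA opprB subrKA.
Qed.

Section NoNontrivialFiltration.
Variables (gT : finGroupType) (G : {group gT}) (X : {set gT}).
Variables (k : fieldType) (V : vectType k).
Variables (act : gT -> 'End(V)) (Vg : gT -> {vspace V}).
Variables (c : 'M[k]_(\dim {:V}) -> 'M[k]_(\dim {:V})) (F : nat -> {vspace V}).
Hypotheses (HYD : is_YD G act Vg) (suppX : YD_support G Vg = X).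
Hypotheses (Hbr : is_YD_braiding G act Vg c) (HF : decreasing_filtration c F).
Hypothesis genX : G :=: <<X>>%g.
Local Notation e := (vbasis {:V}).
Local Notation grade := (grade HYD).

Lemma X_subG x : x \in X -> x \in G.
Proof. by rewrite -suppX inE => /andP[]. Qed.

(* Elements of the support preserve the filtration: for v in V_x of exact  *)
(* degree d and w in F^j, c(v (x) w) = x.w (x) v vanishes modulo            *)
(* F^j (x) F^(d+1), and v does not, so x.w lies in F^j.                      *)
Lemma support_stable x j w : x \in X -> w \in F j -> act x w \in F j.
Proof.
move=> Xx Fw; have Vx0 : Vg x != 0%VS by move: Xx; rewrite -suppX inE => /andP[].
have [d [Fv Fv']] : exists d, vpick (Vg x) \in F d /\ vpick (Vg x) \notin F d.+1.
  by apply: (filtration_degree HF); rewrite vpick0.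
have ab : (j + d.+1 <= (d + j).+1)%N by rewrite addnS addnC.
have := braiding_vanishes HF ab (tens_space_sub Fv Fw).
case: Hbr => _ c_tens; rewrite (c_tens x) ?X_subG ?memv_pick // tensor_map_tens.
by move/eqP; rewrite tens_eq0 !quotv_eq0 (negbTE Fv') orbF.
Qed.

Lemma filtration_stable g j w : g \in G -> w \in F j -> act g w \in F j.
Proof.
pose P g := g \in G /\ forall w, w \in F j -> act g w \in F j.
suff PG : forall g, g \in G -> P g by move=> /PG[_]; apply.
move=> {}g; rewrite genX => /gen_prodgP[m [cs Xcs ->]].
apply: (big_ind P) => [|g1 g2 [G1 P1] [G2 P2]|i _].
- by split => // u Fu; rewrite (act1 HYD).
- by split => [|u Fu]; rewrite ?groupM // (actM HYD) ?P1 ?P2.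
- by split => [|u Fu]; rewrite ?X_subG ?support_stable.
Qed.

Definition multiplier i (lam : gT -> k) : Prop :=
  forall v, v \in F i -> \sum_(g in G) lam g *: grade g v \in F i.

Lemma multiplier_const i a : multiplier i (fun _ => a).
Proof. by move=> v Fv; rewrite -scaler_sumr grade_sum memvZ. Qed.

Lemma multiplier_lin i a lam1 lam2 : multiplier i lam1 -> multiplier i lam2 ->
  multiplier i (fun g => a * lam1 g + lam2 g).
Proof.
move=> m1 m2 v Fv.
rewrite (eq_bigr (fun g => a *: (lam1 g *: grade g v) + lam2 g *: grade g v)).
  by rewrite big_split /= -scaler_sumr memvD ?memvZ ?m1 ?m2.
by move=> g _; rewrite scalerDl scalerA.
Qed.

(* Products of multipliers are multipliers: sum_g lam2(g) v_g has          *)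
(* homogeneous components lam2(g) v_g.                                        *)
Lemma multiplier_mul i lam1 lam2 : multiplier i lam1 -> multiplier i lam2 ->
  multiplier i (fun g => lam1 g * lam2 g).
Proof.
move=> m1 m2 v Fv; have := m1 _ (m2 v Fv).
rewrite (eq_bigr (fun g => (lam1 g * lam2 g) *: grade g v)) // => g Gg.
by rewrite grade_sum_homog ?scalerA // => h _; rewrite memvZ ?grade_mem.
Qed.

(* For w in F^j, each coordinate of g.w modulo F^(j+1) is an F^i-multiplier: *)
(* reduce c(v (x) w) = sum_g g.w (x) v_g modulo F^(j+1) (x) F^i.             *)
Lemma multiplier_coord i j w l : w \in F j ->
  multiplier i (fun g => coord e l (quotv (F j.+1) (act g w))).
Proof.
move=> Fw v Fv; have ab : (j.+1 + i <= (i + j).+1)%N by rewrite addSn addnC.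
have := braiding_vanishes HF ab (tens_space_sub Fv Fw).
rewrite (braiding_tens HYD Hbr) linear_sum => /(congr1 (row l)).
rewrite linear0 linear_sum => sum0.
rewrite -quotv_eq0 -(rVof_eq0 (vbasisP fullv)) !linear_sum.
apply/eqP; rewrite -[in RHS]sum0; apply: eq_bigr => g _.
by rewrite tensor_map_tens /= row_tens !linearZ.
Qed.

Definition graded_equal x y : Prop :=
  forall j w, w \in F j -> act x w - act y w \in F j.+1.

(* If x and y differ on the associated graded space, some coordinate        *)
(* multiplier of multiplier_coord separates them.                            *)
Lemma separating_multiplier i x y : ~ graded_equal x y ->
  exists2 lam, multiplier i lam & lam x != lam y.
Proof.
move=> xy_neq; have [j [w [Fw xyw]]] :
    exists j w, w \in F j /\ act x w - act y w \notin F j.+1.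
  apply: NNPP => xy_eq; apply: xy_neq => j w Fw.
  by apply/negPn/negP => xyw; apply: xy_eq; exists j, w.
have /rV0Pn[l] : rVof e (quotv (F j.+1) (act x w - act y w)) != 0.
  by rewrite rVof_eq0 ?vbasisP // quotv_eq0.
rewrite mxE !linearB subr_eq0 => xy_l.
by exists (fun g => coord e l (quotv (F j.+1) (act g w))); first exact: multiplier_coord.
Qed.

(* If distinct elements of X never agree on the associated graded space,    *)
(* then multipliers separate the points of X, so by interpolation each      *)
(* projection v |-> v_x (x in X) preserves every F^i.                         *)
Lemma grade_stable i x v :
  (forall x y, x \in X -> y \in X -> x != y -> ~ graded_equal x y) ->
  x \in X -> v \in F i -> grade x v \in F i.
Proof.
move=> sepX Xx Fv.
have [|lam [mlam lam_x lam_X]] := separating_indicator (@multiplier_const i)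
    (@multiplier_lin i) (@multiplier_mul i) (x := x) (r := enum (X :\ x)).
  move=> y; rewrite mem_enum in_setD1 => /andP[yx Xy].
  by apply: separating_multiplier; apply: sepX; rewrite // eq_sym.
have := mlam v Fv; rewrite (bigD1 x) ?X_subG //= lam_x scale1r big1 ?addr0 //.
move=> g /andP[Gg gx]; have [Xg|nXg] := boolP (g \in X).
  by rewrite lam_X ?scale0r // mem_enum in_setD1 gx.
by rewrite grade_out ?suppX ?scaler0.
Qed.

Lemma filtration_submodule i :
  (forall x y, x \in X -> y \in X -> x != y -> ~ graded_equal x y) ->
  YD_submodule G act Vg (F i).
Proof.
move=> sepX; split=> [h Gh|].
  by apply/subvP => _ /memv_imgP[w Fw ->]; apply: filtration_stable.
apply/eqP; rewrite eqEsubv; apply/andP; split; last first.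
  by apply/subv_sumP => g _; exact: capvSl.
apply/subvP => v Fv; rewrite -(grade_sum HYD v); apply: memv_sumr => g Gg.
rewrite memv_cap grade_mem andbT; have [Xg|nXg] := boolP (g \in X).
  exact: grade_stable.
by rewrite grade_out ?suppX ?mem0v.
Qed.

Definition shifts m g : Prop :=
  g \in G /\ forall j w, w \in F j -> act g w - w \in F (j + m).

Lemma shifts1 m : shifts m 1%g.
Proof. by split=> // j w _; rewrite (act1 HYD) subrr mem0v. Qed.

(* gh - 1 = g(h - 1) + (g - 1). *)
Lemma shiftsM m g h : shifts m g -> shifts m h -> shifts m (g * h)%g.
Proof.
move=> [Gg sg] [Gh sh]; split=> [|j w Fw]; first by rewrite groupM.
rewrite (actM HYD) // -[_ - w](subrKA (act g w)) -linearB /=.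
by rewrite memvD ?sg ?filtration_stable ?sh.
Qed.

(* z^-1 g z - 1 = z^-1 (g - 1) z. *)
Lemma shiftsJ m g z : shifts m g -> z \in G -> shifts m (g ^ z)%g.
Proof.
move=> [Gg sg] Gz; split=> [|j w Fw]; first by rewrite groupJ.
rewrite /conjg !(actM HYD) ?groupV ?groupM // -{2}(actVK HYD w Gz) -linearB.
by rewrite filtration_stable ?groupV ?sg ?filtration_stable.
Qed.

(* [g, h] - 1 = g^-1 h^-1 ((g - 1)(h - 1) - (h - 1)(g - 1)). *)
Lemma shiftsR a b g h : shifts a g -> shifts b h -> shifts (a + b) [~ g, h]%g.
Proof.
move=> [Gg sg] [Gh sh]; split=> [|j w Fw]; first by rewrite groupR.
have [GgV GhV] := (groupVr Gg, groupVr Gh).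
rewrite /commg /conjg !(actM HYD) ?groupM //.
rewrite -{2}(actVK HYD w Gg) -(actVK HYD (act g w) Gh) -!linearB.
do 2![apply: filtration_stable => //].
rewrite (commutator_diff _ (act g w) (act h w) _ w) -!linearB addnA memvB //.
  by rewrite addnAC; apply: sg; apply: sh.
by apply: sh; apply: sg.
Qed.

Lemma graded_equal_shifts x y : x \in G -> y \in G -> graded_equal x y ->
  shifts 1 (x^-1 * y)%g.
Proof.
move=> Gx Gy xy; split=> [|j w Fw]; first by rewrite groupM ?groupV.
rewrite (actM HYD) ?groupV // -{2}(actVK HYD w Gx) -linearB addn1.
by rewrite filtration_stable ?groupV // -opprB memvN xy.
Qed.

Lemma shifts_trivial g w : (forall m, shifts m.+1 g) -> act g w = w.
Proof.
move=> sg; apply/eqP; rewrite -subr_eq0; apply/eqP.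
apply: (filtration_separated HF) => m; have [_ sgm] := sg m.
apply: subvP (filtration_mono HF (leqnSn m)) _ _.
by have := sgm 0%N w; rewrite (filtration_top HF) memvf add0n; apply.
Qed.

(* If two distinct elements of the class X agree on the graded space, then   *)
(* x^-1 y is a nontrivial element of the simple group [G, G] shifting F by 1; *)
(* so all of [G, G] does, and being perfect it shifts F arbitrarily far.     *)
Lemma derived_acts_trivially x y : x \in X -> y \in X -> x != y ->
  graded_equal x y -> (x^-1 * y)%g \in [~: G, G]%g ->
  simple [~: G, G]%g -> ~~ abelian [~: G, G]%g ->
  forall g w, g \in [~: G, G]%g -> act g w = w.
Proof.
move=> Xx Xy xy eq_xy H_xy simpleH nabH g w Hg; apply: shifts_trivial => m.
have xy1 : (x^-1 * y != 1)%g by rewrite -eq_mulVg1.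
have shiftsJH g1 z : shifts 1 g1 -> z \in [~: G, G]%g -> shifts 1 (g1 ^ z)%g.
  by move=> sg1 Hz; apply: shiftsJ sg1 (subsetP (der1_subG G) z Hz).
have sH := simple_normal_closure simpleH H_xy xy1
  (graded_equal_shifts (X_subG Xx) (X_subG Xy) eq_xy) (shifts1 1) (@shiftsM 1) shiftsJH.
have perfH := simple_nonabelian_perfect simpleH nabH.
exact: perfect_lift perfH shifts1 shiftsM shiftsR sH m g Hg.
Qed.

(* A subgroup of G acting trivially on V centralises X, hence G. *)
Lemma trivial_action_abelian (H : {group gT}) : H \subset G ->
  (forall g w, g \in H -> act g w = w) -> abelian H.
Proof.
move=> sHG triv; apply: subset_trans (centS sHG).
have -> : 'C(G)%g = 'C(X)%g by rewrite genX cent_gen.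
apply/centsP => z Hz x Xx; apply/commute_sym/cent1P.
have Gz := subsetP sHG z Hz.
by apply: (subsetP (trivial_action_cent HYD Gz (fun w => triv z w Hz))); rewrite suppX.
Qed.
End NoNontrivialFiltration.

Theorem mainTheorem18 (gT : finGroupType) (G : {group gT}) (X : {set gT})
    (k : fieldType) (V : vectType k)
    (act : gT -> 'End(V)) (Vg : gT -> {vspace V})
    (c : 'M[k]_(\dim (fullv : {vspace V})) -> 'M[k]_(\dim (fullv : {vspace V}))) :
  (exists2 x, x \in G & X = (x ^: G)%g) ->
  G :=: <<X>>%g ->
  simple [~: G, G]%g ->
  ~~ abelian [~: G, G]%g ->
  is_YD G act Vg ->
  YD_irreducible G act Vg ->
  YD_support G Vg = X ->
  is_YD_braiding G act Vg c ->
  forall F : nat -> {vspace V}, decreasing_filtration c F ->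
  forall i, F i = 0%VS \/ F i = fullv.
Proof.
move=> [x0 Gx0 defX] genX simpleH nabH HYD irrV suppX Hbr F HF i.
have [[x [y [Xx Xy xy eq_xy]]]|sepX] :=
  classic (exists x y, [/\ x \in X, y \in X, x != y & graded_equal act F x y]).
- have H_xy : (x^-1 * y)%g \in [~: G, G]%g.
    by rewrite defX in Xx Xy; exact: class_mulVg_der Gx0 Xx Xy.
  have trivH := derived_acts_trivially HYD suppX Hbr HF genX Xx Xy xy eq_xy H_xy
    simpleH nabH.
  by rewrite (trivial_action_abelian HYD suppX genX (der1_subG G) trivH) in nabH.
- case: irrV => _; apply; apply: (filtration_submodule HYD suppX Hbr HF genX).
  by move=> x y Xx Xy xy eq_xy; apply: sepX; exists x, y.
Qed.
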